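(* Let $G$ be a finite group with irreducible complex characters $\psi_1,\dots,\psi_k$ of dimensions $n_i=\psi_i(1)$. Consider the problem of minimizing, over $(\alpha_1,\dots,\alpha_k)\in\mathbb{R}^k$, the quantity $$\Big\|\sum_{i=1}^k\frac{\alpha_i}{n_i^2}\mathrm{Re}(\psi_i)\Big\|_1$$ subject to the constraints $\sum_{i=1}^k\alpha_in_i=|G|$, $\alpha_i\ge0$ for $i=1,\dots,k$, and $\sum_{i=1}^k\alpha_i\mathrm{Re}(\psi_i(g))\ge0$ for all $g\in G$. Then $(\alpha_1,\dots,\alpha_k)=(n_1,\dots,n_k)$, i.e. the regular character $n_1\psi_1+\cdots+n_k\psi_k$, is a solution of this constrained minimization problem.
   Context: For a complex-valued function $f$ on $G$, its $L_1$ norm is $\|f\|_1=\sum_{g\in G}|\mathrm{Re}(f(g))|$. *)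

From HB Require Import structures.
From mathcomp Require Import all_boot all_order all_algebra all_fingroup all_solvable all_field all_character.
Unset Printing Implicit Defensive.
Import Order.TTheory GRing.Theory Num.Theory.
Local Open Scope ring_scope.

Definition L1norm {gT : finGroupType} (G : {group gT}) (f : gT -> algC) : algC :=
  \sum_(g in G) `|'Re (f g)|.

Definition cdim {gT : finGroupType} (G : {group gT}) (i : Iirr G) : algC :=
  'chi[G]_i 1%g.

Definition weighted_fun {gT : finGroupType} (G : {group gT})
    (alpha : Iirr G -> algC) (g : gT) : algC :=
  \sum_(i : Iirr G) alpha i / (cdim G i) ^+ 2 * 'Re ('chi[G]_i g).

Definition objective {gT : finGroupType} (G : {group gT})
    (alpha : Iirr G -> algC) : algC :=
  L1norm G (weighted_fun G alpha).

(* feasibility: alpha real nonnegative (alpha_i >= 0 in algC forces real),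
   sum alpha_i n_i = |G|, and sum alpha_i Re(psi_i(g)) >= 0 for all g in G *)
Definition feasible {gT : finGroupType} (G : {group gT})
    (alpha : Iirr G -> algC) : Prop :=
  [/\ \sum_(i : Iirr G) alpha i * cdim G i = #|G|%:R,
      forall i, 0 <= alpha i &
      forall g, g \in G -> 0 <= \sum_(i : Iirr G) alpha i * 'Re ('chi[G]_i g)].

From HB Require Import structures.
From mathcomp Require Import all_boot all_order all_algebra all_fingroup all_solvable all_field all_character.
Import Order.TTheory GRing.Theory Num.Theory.
Local Open Scope ring_scope.

(* Column orthogonality gives sum_(g in G) psi_i(g) = |G| [psi_i = 1], so
   summing a combination sum_i c_i Re psi_i(g) over G leaves c_1 |G|, where
   psi_1 is the trivial character ('chi_0 here).  For a feasible alpha the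
   summed constraint is at least its term at g = 1, which is |G|; hence
   alpha_1 >= 1, and the objective, which dominates the sum of the weighted
   function, is at least alpha_1 |G| >= |G|.  For alpha = n the weighted
   function is sum_i Re psi_i(g) / psi_i(1), which is nonnegative: after
   multiplication by |G| it is the sum over x in G of the nonnegative
   class-algebra structure constants a(x^G, x^-1^G; g^G), each rescaled by a
   positive rational.  So the L1 norm of that function is its sum, |G|. *)

Section IrrColumnSums.

Context {gT : finGroupType} {G : {group gT}}.

Lemma irr1_real (i : Iirr G) : 'chi[G]_i 1%g \is Num.real.
Proof. exact/ger0_real/ltW/irr1_gt0. Qed.

Lemma sum_irr (i : Iirr G) : \sum_(g in G) 'chi[G]_i g = #|G|%:R * (i == 0)%:R.
Proof.
rewrite -cfdot_irr cfdotE mulrA mulfV ?neq0CG // mul1r.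
by apply: eq_bigr => g Gg; rewrite irr0 cfun1E Gg conjC1 mulr1.
Qed.

Lemma sum_Re_irr (i : Iirr G) :
  \sum_(g in G) 'Re ('chi[G]_i g) = #|G|%:R * (i == 0)%:R.
Proof.
by rewrite -raddf_sum sum_irr; apply/Creal_ReP; rewrite -natrM realn.
Qed.

Lemma sum_Re_irr_lincomb (c : Iirr G -> algC) :
  \sum_(g in G) \sum_i c i * 'Re ('chi[G]_i g) = c 0 * #|G|%:R.
Proof.
rewrite exchange_big (bigD1 0) //= [X in _ + X]big1 => [|i /negPf i_neq0].
  by rewrite -mulr_sumr sum_Re_irr eqxx mulr1 addr0.
by rewrite -mulr_sumr sum_Re_irr i_neq0 !mulr0.
Qed.

Lemma sum_irr_irrV (i : Iirr G) :
  \sum_(x in G) 'chi[G]_i x * 'chi[G]_i x^-1%g = #|G|%:R.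
Proof.
have := cfnorm_irr i; rewrite cfdotE => /(congr1 (fun z => #|G|%:R * z)).
rewrite mulrA mulfV ?neq0CG // mul1r mulr1 => <-.
by apply: eq_bigr => x _; rewrite irr_inv.
Qed.

(* Isaacs, Problem (3.7). *)
Lemma class_coef_sum_ge0 (x g : gT) : x \in G -> g \in G ->
  0 <= \sum_i 'chi[G]_i x * 'chi[G]_i x^-1%g * ('chi[G]_i g)^* / 'chi[G]_i 1%g.
Proof.
move=> Gx Gg; have GxV : x^-1%g \in G by rewrite groupV.
pose class_of y := enum_rank_in (classes1 G) (y ^: G)%g.
have class_ofE y : y \in G -> enum_val (class_of y) = (y ^: G)%g.
  by move=> Gy; rewrite enum_rankK_in ?mem_classes.
have in_class_of y : y \in G -> y \in enum_val (class_of y).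
  by move=> Gy; rewrite class_ofE ?class_refl.
have := gring_classM_coef_sum_eq (in_class_of x Gx) (in_class_of _ GxV)
  (in_class_of g Gg) => /= coefE.
have scale_gt0 : 0 < (#|enum_val (class_of x)| *
    #|enum_val (class_of x^-1%g)|)%:R / #|G|%:R :> algC.
  rewrite divr_gt0 ?gt0CG // ltr0n muln_gt0.
  by apply/andP; split; apply/card_gt0P; [exists x | exists x^-1%g];
     apply: in_class_of.
by rewrite -(pmulr_rge0 _ scale_gt0) -coefE ler0n.
Qed.

Lemma sum_conj_irr_div_irr1_ge0 (g : gT) : g \in G ->
  0 <= \sum_i ('chi[G]_i g)^* / 'chi[G]_i 1%g.
Proof.
move=> Gg; rewrite -(pmulr_rge0 _ (gt0CG G)).
have -> : #|G|%:R * \sum_i ('chi[G]_i g)^* / 'chi[G]_i 1%g =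
    \sum_(x in G) \sum_i
      'chi[G]_i x * 'chi[G]_i x^-1%g * ('chi[G]_i g)^* / 'chi[G]_i 1%g.
  rewrite exchange_big mulr_sumr; apply: eq_bigr => i _.
  by rewrite -!mulr_suml sum_irr_irrV mulrA.
by apply: sumr_ge0 => x Gx; apply: class_coef_sum_ge0.
Qed.

Lemma sum_Re_irr_div_irr1_ge0 (g : gT) : g \in G ->
  0 <= \sum_i 'Re ('chi[G]_i g) / 'chi[G]_i 1%g.
Proof.
move=> /sum_conj_irr_div_irr1_ge0 sum_ge0.
have -> : \sum_i 'Re ('chi[G]_i g) / 'chi[G]_i 1%g =
    'Re (\sum_i ('chi[G]_i g)^* / 'chi[G]_i 1%g).
  rewrite raddf_sum /=; apply: eq_bigr => i _.
  by rewrite ReMr ?Re_conj // rpredV irr1_real.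
by move/ger0_real/Creal_ReP: (sum_ge0) => ->.
Qed.

End IrrColumnSums.

Section L1norm.

Context {gT : finGroupType} {G : {group gT}}.

Lemma L1norm_ge_Re_sum (f : gT -> algC) : 'Re (\sum_(g in G) f g) <= L1norm G f.
Proof.
by rewrite raddf_sum; apply: ler_sum => g _; apply/real_ler_norm/Creal_Re.
Qed.

Lemma L1norm_ge0_fun (f : gT -> algC) : {in G, forall g, 0 <= f g} ->
  L1norm G f = \sum_(g in G) f g.
Proof.
move=> f_ge0; apply: eq_bigr => g Gg.
by move/ger0_real/Creal_ReP: (f_ge0 g Gg) => ->; apply/ger0_norm/f_ge0.
Qed.

End L1norm.

Section Objective.

Context {gT : finGroupType} {G : {group gT}}.

Lemma sum_weighted_fun (alpha : Iirr G -> algC) :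
  \sum_(g in G) weighted_fun G alpha g = alpha 0 * #|G|%:R.
Proof.
rewrite (sum_Re_irr_lincomb (fun i => alpha i / cdim G i ^+ 2)).
by rewrite /cdim irr0 cfun1E group1 expr1n divr1.
Qed.

Lemma weighted_fun_cdim (g : gT) :
  weighted_fun G (cdim G) g = \sum_i 'Re ('chi[G]_i g) / 'chi[G]_i 1%g.
Proof.
apply: eq_bigr => i _; rewrite /cdim expr2 invfM mulrA mulfV ?irr1_neq0 //.
by rewrite mul1r mulrC.
Qed.

Lemma objective_cdim : objective G (cdim G) = #|G|%:R.
Proof.
rewrite /objective L1norm_ge0_fun ?sum_weighted_fun => [|g Gg].
  by rewrite /cdim irr0 cfun1E group1 mul1r.
by rewrite weighted_fun_cdim sum_Re_irr_div_irr1_ge0.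
Qed.

Lemma objective_ge (alpha : Iirr G -> algC) : alpha 0 \is Num.real ->
  alpha 0 * #|G|%:R <= objective G alpha.
Proof.
move=> alpha0_real; apply: le_trans (L1norm_ge_Re_sum _).
rewrite sum_weighted_fun.
by have /Creal_ReP -> : alpha 0 * #|G|%:R \is Num.real by rewrite rpredM ?realn.
Qed.

Lemma feasible_cdim : feasible G (cdim G).
Proof.
split=> [|i|g Gg]; first by rewrite -irr_sum_square; apply: eq_bigr => i _.
  exact/ltW/irr1_gt0.
have -> : \sum_i cdim G i * 'Re ('chi[G]_i g) = 'Re (cfReg G g).
  rewrite cfReg_sum sum_cfunE raddf_sum /=; apply: eq_bigr => i _.
  by rewrite cfunE ReMl ?irr1_real.
have Reg_ge0 : 0 <= cfReg G g by rewrite cfRegE mulrn_wge0.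
by move/ger0_real/Creal_ReP: (Reg_ge0) => ->.
Qed.

Lemma feasible_irr0_ge1 (alpha : Iirr G -> algC) :
  feasible G alpha -> 1 <= alpha 0.
Proof.
case=> sum_cdim _ constraint_ge0.
rewrite -(ler_pMl _ (gt0CG G)) -sum_Re_irr_lincomb (bigD1 1%g) ?group1 //=.
have -> : \sum_i alpha i * 'Re ('chi[G]_i 1%g) = #|G|%:R.
  rewrite -sum_cdim; apply: eq_bigr => i _.
  by congr (_ * _); apply/Creal_ReP/irr1_real.
by rewrite lerDl sumr_ge0 // => g /andP[Gg _]; apply: constraint_ge0.
Qed.

End Objective.

Theorem corollary2 (gT : finGroupType) (G : {group gT}) :
  feasible G (cdim G) /\
  (forall alpha : Iirr G -> algC, feasible G alpha ->
     objective G (cdim G) <= objective G alpha).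
Proof.
split=> [|alpha feas]; first exact: feasible_cdim.
have alpha0_ge1 : 1 <= alpha 0 by apply: feasible_irr0_ge1.
have alpha0_real : alpha 0 \is Num.real by apply/ger0_real/(le_trans ler01).
rewrite objective_cdim; apply: le_trans (objective_ge _ alpha0_real).
by rewrite ler_pMl ?gt0CG.
Qed.
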